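(* Let $a,b\in\mathbb R$ and $s,t\in\mathbb N$. The system $\ddot x_1=a\,\dot x_1^{2-t}\dot x_2^{t}$, $\ddot x_2=b\,\dot x_1^{2-s}\dot x_2^{s}$ on $\mathbb R^2$ (spray $S=y_1\frac{\partial}{\partial x_1}+y_2\frac{\partial}{\partial x_2}+a y_1^{2-t}y_2^t\frac{\partial}{\partial y_1}+b y_1^{2-s}y_2^s\frac{\partial}{\partial y_2}$, considered where defined, e.g. on $y_1\ne0$, $y_2\neq 0$) cannot be the geodesic system of a non-Berwald Landsberg metric: there is no open set $U$ on which the Berwald curvature $\mathcal R$ of $S$ is not identically zero together with a function $E:U\to\mathbb R$ satisfying (H), (EL), (Ls) with $(g_{ij})$ positive definite.
   Context: Coordinates $(x^1,x^2,y^1,y^2)=(x_1,x_2,y_1,y_2)$ on $T\mathbb R^2$. For a spray $S=y^i\frac{\partial}{\partial x^i}+f^i\frac{\partial}{\partial y^i}$: $\Gamma^i_j=-\frac12\frac{\partial f^i}{\partial y^j}$, $\Gamma^i_{jk}=\frac{\partial\Gamma^i_j}{\partial y^k}$; Berwald curvature $\mathcal R=-\frac12\frac{\partial^3f^l}{\partial y^i\partial y^j\partial y^k}dx^i\otimes dx^j\otimes dx^k\otimes\frac{\partial}{\partial y^l}$ (a Landsberg metric is of Berwald type iff $\mathcal R=0$). For $E$ smooth, $g_{ij}=\frac{\partial^2E}{\partial y^i\partial y^j}$; (H) $y^i\frac{\partial E}{\partial y^i}-2E=0$; (EL) $y^j\frac{\partial^2E}{\partial x^j\partial y^i}+f^j\frac{\partial^2E}{\partial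 y^j\partial y^i}-\frac{\partial E}{\partial x^i}=0$; (Ls) $\frac{\partial g_{jk}}{\partial x^i}-\Gamma^l_i\frac{\partial g_{jk}}{\partial y^l}-\Gamma^l_{ik}g_{lj}-\Gamma^l_{ij}g_{lk}=0$. *)

From Stdlib Require Import Reals ZArith.
From Coquelicot Require Import Coquelicot.
Open Scope R_scope.

(* Points of T R^2 = R^4 with coordinates (x1, x2, y1, y2). *)
Record pt := Pt { px1 : R; px2 : R; py1 : R; py2 : R }.

Inductive coord := X1 | X2 | Y1 | Y2.

Definition get (c : coord) (p : pt) : R :=
  match c with X1 => px1 p | X2 => px2 p | Y1 => py1 p | Y2 => py2 p end.

Definition setc (c : coord) (p : pt) (r : R) : pt :=
  match c with
  | X1 => Pt r (px2 p) (py1 p) (py2 p)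
  | X2 => Pt (px1 p) r (py1 p) (py2 p)
  | Y1 => Pt (px1 p) (px2 p) r (py2 p)
  | Y2 => Pt (px1 p) (px2 p) (py1 p) r
  end.

Definition pd (c : coord) (F : pt -> R) : pt -> R :=
  fun p => Derive (fun r => F (setc c p r)) (get c p).

Definition pd_list (l : list coord) (F : pt -> R) : pt -> R :=
  List.fold_right pd F l.

Definition dist4 (p q : pt) : R :=
  Rmax (Rmax (Rabs (px1 p - px1 q)) (Rabs (px2 p - px2 q)))
       (Rmax (Rabs (py1 p - py1 q)) (Rabs (py2 p - py2 q))).

Definition open4 (U : pt -> Prop) : Prop :=
  forall p, U p -> exists eps, 0 < eps /\ forall q, dist4 p q < eps -> U q.

Definition cont4_at (F : pt -> R) (p : pt) : Prop :=
  forall eps, 0 < eps -> exists del, 0 < del /\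
    forall q, dist4 p q < del -> Rabs (F q - F p) < eps.

Definition smooth_on (U : pt -> Prop) (F : pt -> R) : Prop :=
  forall (l : list coord) (p : pt), U p ->
    cont4_at (pd_list l F) p /\
    (forall c, ex_derive (fun r => pd_list l F (setc c p r)) (get c p)).

Inductive ix := I1 | I2.
Definition xc (i : ix) : coord := match i with I1 => X1 | I2 => X2 end.
Definition yc (i : ix) : coord := match i with I1 => Y1 | I2 => Y2 end.
Definition yv (i : ix) (p : pt) : R := get (yc i) p.
Definition sum2 (f : ix -> R) : R := f I1 + f I2.

Definition fS (a b : R) (s t : nat) (i : ix) : pt -> R :=
  match i with
  | I1 => fun p => a * powerRZ (py1 p) (2 - Z.of_nat t)%Z * (py2 p) ^ t
  | I2 => fun p => b * powerRZ (py1 p) (2 - Z.of_nat s)%Z * (py2 p) ^ s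
  end.

(* domain where the spray is defined: y1 <> 0 whenever a negative
   exponent of y1 occurs *)
Definition spray_domain (s t : nat) (p : pt) : Prop :=
  ((2 < t)%nat \/ (2 < s)%nat) -> py1 p <> 0.

Definition Gam1 (a b : R) (s t : nat) (i j : ix) : pt -> R :=
  fun p => - / 2 * pd (yc j) (fS a b s t i) p.
Definition Gam2 (a b : R) (s t : nat) (i j k : ix) : pt -> R :=
  pd (yc k) (Gam1 a b s t i j).

Definition berwald (a b : R) (s t : nat) (l i j k : ix) : pt -> R :=
  fun p => - / 2 * pd (yc i) (pd (yc j) (pd (yc k) (fS a b s t l))) p.

Definition gmet (E : pt -> R) (j k : ix) : pt -> R :=
  pd (yc j) (pd (yc k) E).

Definition condH (E : pt -> R) (p : pt) : Prop :=
  sum2 (fun i => yv i p * pd (yc i) E p) - 2 * E p = 0.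

Definition condEL (a b : R) (s t : nat) (E : pt -> R) (p : pt) : Prop :=
  forall i : ix,
    sum2 (fun j => yv j p * pd (xc j) (pd (yc i) E) p)
    + sum2 (fun j => fS a b s t j p * pd (yc j) (pd (yc i) E) p)
    - pd (xc i) E p = 0.

Definition condLs (a b : R) (s t : nat) (E : pt -> R) (p : pt) : Prop :=
  forall i j k : ix,
    pd (xc i) (gmet E j k) p
    - sum2 (fun l => Gam1 a b s t l i p * pd (yc l) (gmet E j k) p)
    - sum2 (fun l => Gam2 a b s t l i k p * gmet E l j p)
    - sum2 (fun l => Gam2 a b s t l i j p * gmet E l k p) = 0.

Definition posdef (E : pt -> R) (p : pt) : Prop :=
  forall v : ix -> R, (v I1 <> 0 \/ v I2 <> 0) ->
    0 < sum2 (fun j => sum2 (fun k => gmet E j k p * v j * v k)).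

From Stdlib Require Import Reals ZArith Lia Lra FunctionalExtensionality.
From Coquelicot Require Import Coquelicot.
Open Scope R_scope.

(* (H) makes E homogeneous of degree 2 in y, so g y = dE/dy and positive
   definiteness gives y . dE/dy = g(y, y) > 0.  Contracting (Ls) with y^j yields
   d_{x^i} dE/dy^k = Gam^l_{ik} dE/dy^l + Gam^l_i g_{lk}; differentiating this in
   y^j and comparing with (Ls) once more shows that the Berwald tensor annihilates
   dE/dy.  In particular c^l := B^l_{222} = -1/2 d^3 f^l / dy2^3 satisfies
   c . dE/dy = 0 on U.  Its y-derivatives give dc . dE/dy + g c = 0, and its
   x-derivatives, rewritten with the contracted identity, make dE/dy orthogonal
   to the brackets [c, Gam_i] of fibre vector fields; in the plane this forces
   det(c, [c, Gam_i]) = 0.  If c is a multiple of a constant vector w (one of the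
   coefficients a t(t-1)(t-2), b s(s-1)(s-2) vanishes, or t = s), then g w = 0,
   contradicting positivity.  Otherwise the two determinants factor explicitly
   and force c to be parallel to y, so that c . dE/dy is a nonzero multiple of
   y . dE/dy > 0. *)

Lemma get_setc c p r : get c (setc c p r) = r.
Proof. now destruct c. Qed.

Lemma get_setc_neq c c' p r : c <> c' -> get c' (setc c p r) = get c' p.
Proof. destruct c, c'; intros H; try reflexivity; now exfalso. Qed.

Lemma setc_get c p : setc c p (get c p) = p.
Proof. now destruct c, p. Qed.

Lemma setc_setc c p r r' : setc c (setc c p r) r' = setc c p r'.
Proof. now destruct c. Qed.

Lemma setc_comm c1 c2 p r1 r2 : c1 <> c2 ->
  setc c1 (setc c2 p r2) r1 = setc c2 (setc c1 p r1) r2.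
Proof. destruct c1, c2; intros H; try reflexivity; now exfalso. Qed.

Lemma dist4_setc2 c1 c2 p r1 r2 e :
  Rabs (get c1 p - r1) < e -> Rabs (get c2 p - r2) < e ->
  dist4 p (setc c1 (setc c2 p r2) r1) < e.
Proof.
  intros H1 H2.
  assert (H0 : Rabs 0 < e) by (rewrite Rabs_R0; pose proof (Rabs_pos (get c1 p - r1)); lra).
  unfold dist4; destruct c1, c2; simpl in *; rewrite ?Rminus_diag;
    repeat apply Rmax_lub_lt; assumption.
Qed.

Lemma open4_locally U c p : open4 U -> U p ->
  locally (get c p) (fun r => U (setc c p r)).
Proof.
  intros HU Hp. destruct (HU p Hp) as [e [He Hball]].
  exists (mkposreal e He); intros r Hr. apply Hball.
  rewrite <- (setc_setc c p r r).
  apply dist4_setc2; rewrite Rabs_minus_sym; exact Hr.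
Qed.

Definition ex_pd (c : coord) (F : pt -> R) (p : pt) : Prop :=
  ex_derive (fun r => F (setc c p r)) (get c p).

Lemma pd_ext_open U c F G p : open4 U -> U p ->
  (forall q, U q -> F q = G q) -> pd c F p = pd c G p.
Proof.
  intros HU Hp HFG. apply Derive_ext_loc.
  eapply filter_imp; [|exact (open4_locally U c p HU Hp)]. intros r Hr. now apply HFG.
Qed.

Lemma pd_eq0_open U c F p : open4 U -> U p ->
  (forall q, U q -> F q = 0) -> pd c F p = 0.
Proof.
  intros HU Hp HF. rewrite (pd_ext_open U c F (fun _ => 0) p HU Hp HF).
  unfold pd. apply Derive_const.
Qed.

Lemma ex_pd_plus c F G p : ex_pd c F p -> ex_pd c G p -> ex_pd c (fun q => F q + G q) p.
Proof. intros HF HG. exact (ex_derive_plus _ _ _ HF HG). Qed.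

Lemma ex_pd_minus c F G p : ex_pd c F p -> ex_pd c G p -> ex_pd c (fun q => F q - G q) p.
Proof. intros HF HG. exact (ex_derive_minus _ _ _ HF HG). Qed.

Lemma ex_pd_mult c F G p : ex_pd c F p -> ex_pd c G p -> ex_pd c (fun q => F q * G q) p.
Proof. intros HF HG. exact (ex_derive_mult _ _ _ HF HG). Qed.

Lemma ex_pd_scal c k F p : ex_pd c F p -> ex_pd c (fun q => k * F q) p.
Proof. intros HF. exact (ex_derive_scal _ _ _ HF). Qed.

Lemma pd_plus c F G p : ex_pd c F p -> ex_pd c G p ->
  pd c (fun q => F q + G q) p = pd c F p + pd c G p.
Proof. intros HF HG. exact (Derive_plus _ _ _ HF HG). Qed.

Lemma pd_minus c F G p : ex_pd c F p -> ex_pd c G p ->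
  pd c (fun q => F q - G q) p = pd c F p - pd c G p.
Proof. intros HF HG. exact (Derive_minus _ _ _ HF HG). Qed.

Lemma pd_mult c F G p : ex_pd c F p -> ex_pd c G p ->
  pd c (fun q => F q * G q) p = pd c F p * G p + F p * pd c G p.
Proof. intros HF HG. unfold pd. rewrite Derive_mult by assumption. now rewrite setc_get. Qed.

Lemma pd_scal c k F p : pd c (fun q => k * F q) p = k * pd c F p.
Proof. exact (Derive_scal _ _ _). Qed.

Lemma ex_pd_sum2_mult c (A B : ix -> pt -> R) p :
  (forall l, ex_pd c (A l) p) -> (forall l, ex_pd c (B l) p) ->
  ex_pd c (fun q => sum2 (fun l => A l q * B l q)) p.
Proof.
  intros HA HB. unfold sum2.
  apply (ex_pd_plus c (fun q => A I1 q * B I1 q)); now apply ex_pd_mult.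
Qed.

Lemma pd_sum2_mult c (A B : ix -> pt -> R) p :
  (forall l, ex_pd c (A l) p) -> (forall l, ex_pd c (B l) p) ->
  pd c (fun q => sum2 (fun l => A l q * B l q)) p
  = sum2 (fun l => pd c (A l) p * B l p + A l p * pd c (B l) p).
Proof.
  intros HA HB. unfold sum2.
  rewrite (pd_plus c (fun q => A I1 q * B I1 q)) by now apply ex_pd_mult.
  rewrite (pd_mult c (A I1)), (pd_mult c (A I2)); auto.
Qed.

Definition delta (j k : ix) : R :=
  match j, k with I1, I1 | I2, I2 => 1 | _, _ => 0 end.

Lemma ex_pd_yv c j p : ex_pd c (yv j) p.
Proof.
  unfold ex_pd, yv; destruct c, j; simpl; auto_derive; trivial.
Qed.

Lemma pd_yc_yv k j p : pd (yc k) (yv j) p = delta k j.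
Proof.
  unfold pd, yv; destruct k, j; simpl; rewrite ?Derive_id, ?Derive_const; reflexivity.
Qed.

Lemma pd_xc_yv i j p : pd (xc i) (yv j) p = 0.
Proof. unfold pd, yv; destruct i, j; simpl; apply Derive_const. Qed.

Lemma pd_list_app l l' F : pd_list l (pd_list l' F) = pd_list (l ++ l') F.
Proof. unfold pd_list. now rewrite List.fold_right_app. Qed.

Lemma smooth_on_pd_list U F l : smooth_on U F -> smooth_on U (pd_list l F).
Proof. intros HF l' p Hp. rewrite pd_list_app. exact (HF _ p Hp). Qed.

Lemma smooth_on_pd U F c : smooth_on U F -> smooth_on U (pd c F).
Proof. exact (smooth_on_pd_list U F (c :: nil)). Qed.

Lemma smooth_ex_pd U F c p : smooth_on U F -> U p -> ex_pd c F p.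
Proof. intros HF Hp. exact (proj2 (HF nil p Hp) c). Qed.

(** * Symmetry of second derivatives *)

Section Schwarz.

Variables (c1 c2 : coord) (p : pt).
Hypothesis c12 : c1 <> c2.

Let at2 z w := setc c1 (setc c2 p w) z.

Lemma setc1_at2 z w r : setc c1 (at2 z w) r = at2 r w.
Proof. apply setc_setc. Qed.

Lemma setc2_at2 z w r : setc c2 (at2 z w) r = at2 z r.
Proof.
  unfold at2. rewrite (setc_comm c1 c2 p z w), setc_setc by assumption.
  symmetry. now apply setc_comm.
Qed.

Lemma get1_at2 z w : get c1 (at2 z w) = z.
Proof. apply get_setc. Qed.

Lemma get2_at2 z w : get c2 (at2 z w) = w.
Proof. unfold at2. rewrite get_setc_neq by congruence. apply get_setc. Qed.

Lemma at2_center : at2 (get c1 p) (get c2 p) = p.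
Proof. unfold at2. now rewrite !setc_get. Qed.

Lemma pd1_at2 G z w : pd c1 G (at2 z w) = Derive (fun r => G (at2 r w)) z.
Proof. unfold pd. rewrite get1_at2. apply Derive_ext. intros r. now rewrite setc1_at2. Qed.

Lemma pd2_at2 G z w : pd c2 G (at2 z w) = Derive (fun r => G (at2 z r)) w.
Proof. unfold pd. rewrite get2_at2. apply Derive_ext. intros r. now rewrite setc2_at2. Qed.

Lemma ex_pd1_at2 G z w : ex_pd c1 G (at2 z w) -> ex_derive (fun r => G (at2 r w)) z.
Proof.
  unfold ex_pd. rewrite get1_at2. apply ex_derive_ext. intros r. now rewrite setc1_at2.
Qed.

Lemma ex_pd2_at2 G z w : ex_pd c2 G (at2 z w) -> ex_derive (fun r => G (at2 z r)) w.
Proof.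
  unfold ex_pd. rewrite get2_at2. apply ex_derive_ext. intros r. now rewrite setc2_at2.
Qed.

Lemma continuity_2d_at2 G : cont4_at G p ->
  continuity_2d_pt (fun z w => G (at2 z w)) (get c1 p) (get c2 p).
Proof.
  intros HG eps. destruct (HG eps (cond_pos eps)) as [d [Hd Hball]].
  exists (mkposreal d Hd). intros z w Hz Hw. rewrite at2_center.
  apply Hball. apply dist4_setc2; rewrite Rabs_minus_sym; assumption.
Qed.

Lemma pd_comm U F : open4 U -> smooth_on U F -> U p ->
  pd c1 (pd c2 F) p = pd c2 (pd c1 F) p.
Proof.
  intros HU HF Hp.
  set (f := fun z w => F (at2 z w)).
  assert (outer12 : forall z w,
    Derive (fun r => Derive (fun r' => f r r') w) z = pd c1 (pd c2 F) (at2 z w)).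
  { intros z w. rewrite pd1_at2. apply Derive_ext. intros r. now rewrite pd2_at2. }
  assert (outer21 : forall z w,
    Derive (fun r => Derive (fun r' => f r' r) z) w = pd c2 (pd c1 F) (at2 z w)).
  { intros z w. rewrite pd2_at2. apply Derive_ext. intros r. now rewrite pd1_at2. }
  pose proof (Schwarz f (get c1 p) (get c2 p)) as HS.
  rewrite outer12, outer21, at2_center in HS. apply HS; clear HS.
  - destruct (HU p Hp) as [e [He Hball]]. exists (mkposreal e He). intros z w Hz Hw.
    assert (Hzw : U (at2 z w))
      by (apply Hball, dist4_setc2; rewrite Rabs_minus_sym; assumption).
    repeat split.
    + apply ex_pd1_at2. exact (smooth_ex_pd U F c1 _ HF Hzw).
    + apply ex_pd2_at2. exact (smooth_ex_pd U F c2 _ HF Hzw).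
    + apply (ex_derive_ext (fun r => pd c2 F (at2 r w))); [intros r; apply pd2_at2|].
      apply ex_pd1_at2. exact (smooth_ex_pd U (pd c2 F) c1 _ (smooth_on_pd U F c2 HF) Hzw).
    + apply (ex_derive_ext (fun r => pd c1 F (at2 z r))); [intros r; apply pd1_at2|].
      apply ex_pd2_at2. exact (smooth_ex_pd U (pd c1 F) c2 _ (smooth_on_pd U F c1 HF) Hzw).
  - intros eps.
    destruct (continuity_2d_at2 _ (proj1 (HF (c1 :: c2 :: nil)%list p Hp)) eps) as [d Hd].
    exists d. intros z w Hz Hw. rewrite !outer12. exact (Hd z w Hz Hw).
  - intros eps.
    destruct (continuity_2d_at2 _ (proj1 (HF (c2 :: c1 :: nil)%list p Hp)) eps) as [d Hd].
    exists d. intros z w Hz Hw. rewrite !outer21. exact (Hd z w Hz Hw).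
Qed.

End Schwarz.

Lemma gmet_sym U E j k p : open4 U -> smooth_on U E -> U p -> gmet E j k p = gmet E k j p.
Proof.
  intros HU HE Hp. unfold gmet.
  destruct j, k; try reflexivity; apply (pd_comm _ _ p) with U; auto; discriminate.
Qed.

(** * Laurent monomials in the fibre coordinates *)

Lemma is_derive_powerRZ n x : (0 <= n)%Z \/ x <> 0 ->
  is_derive (fun r => powerRZ r n) x (IZR n * powerRZ x (n - 1)).
Proof.
  intros Hnx. destruct (Z_le_gt_dec 0 n) as [Hn|Hn].
  - destruct (Z_of_nat_complete n Hn) as [[|k] ->].
    + replace (IZR (Z.of_nat 0) * _) with 0 by (simpl; ring).
      apply (is_derive_ext (fun _ => 1)); [reflexivity|]. now auto_derive.
    + replace (Z.of_nat (S k) - 1)%Z with (Z.of_nat k) by lia.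
      rewrite <- pow_powerRZ, <- INR_IZR_INZ.
      apply (is_derive_ext (fun r => r ^ S k)); [intros r; apply pow_powerRZ|].
      replace (INR (S k) * x ^ k) with (INR (S k) * 1 * x ^ Nat.pred (S k)) by (simpl; ring).
      apply is_derive_pow; now auto_derive.
  - destruct Hnx as [Hn'|Hx]; [lia|].
    destruct (Z_of_nat_complete (- n - 1)) as [k Hk]; [lia|].
    replace n with (- Z.of_nat (S k))%Z by lia.
    apply (is_derive_ext (fun r => / r ^ S k)).
    { intros r. now rewrite powerRZ_neg', <- pow_powerRZ. }
    replace (- Z.of_nat (S k) - 1)%Z with (- Z.of_nat (S (S k)))%Z by lia.
    rewrite powerRZ_neg', <- pow_powerRZ, opp_IZR, <- INR_IZR_INZ.
    assert (Hxk : x ^ k <> 0) by now apply pow_nonzero.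
    replace (- INR (S k) * / x ^ S (S k))
      with (- (INR (S k) * 1 * x ^ Nat.pred (S k)) / (x ^ S k) ^ 2)
      by (simpl; field; auto).
    apply is_derive_inv; [apply is_derive_pow; now auto_derive | now apply pow_nonzero].
Qed.

Record mon := Mon { mcoef : R; mexp1 : Z; mexp2 : Z }.

Definition eval_mon (x : mon) (p : pt) : R :=
  mcoef x * powerRZ (py1 p) (mexp1 x) * powerRZ (py2 p) (mexp2 x).

Definition dmon (c : coord) (x : mon) : mon :=
  match c with
  | X1 | X2 => Mon 0 (mexp1 x) (mexp2 x)
  | Y1 => Mon (mcoef x * IZR (mexp1 x)) (mexp1 x - 1) (mexp2 x)
  | Y2 => Mon (mcoef x * IZR (mexp2 x)) (mexp1 x) (mexp2 x - 1)
  end.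

Definition dmon_list (l : list coord) (x : mon) : mon := List.fold_right dmon x l.

(* A vanishing coefficient is allowed to carry any exponents: differentiating
   a factor y^0 produces the exponent -1 with coefficient 0. *)
Definition mon_ok (x : mon) (p : pt) : Prop :=
  mcoef x = 0 \/
  (((0 <= mexp1 x)%Z \/ py1 p <> 0) /\ ((0 <= mexp2 x)%Z \/ py2 p <> 0)).

Lemma is_derive_eval_mon c x p : mon_ok x p ->
  is_derive (fun r => eval_mon x (setc c p r)) (get c p) (eval_mon (dmon c x) p).
Proof.
  destruct x as [k n1 n2]. unfold mon_ok; simpl. intros [Hk|[H1 H2]].
  { subst k. replace (eval_mon (dmon c _) p) with 0 by (destruct c; unfold eval_mon; simpl; ring).
    apply (is_derive_ext (fun _ => 0)); [intros r; unfold eval_mon; simpl; ring|].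
    now auto_derive. }
  unfold eval_mon; destruct c; simpl.
  - rewrite !Rmult_0_l. now auto_derive.
  - rewrite !Rmult_0_l. now auto_derive.
  - apply (is_derive_ext (fun r => k * powerRZ (py2 p) n2 * powerRZ r n1));
      [intros r; simpl; ring|].
    replace (k * IZR n1 * powerRZ (py1 p) (n1 - 1) * powerRZ (py2 p) n2)
      with (k * powerRZ (py2 p) n2 * (IZR n1 * powerRZ (py1 p) (n1 - 1))) by ring.
    now apply is_derive_scal, is_derive_powerRZ.
  - apply (is_derive_ext (fun r => k * powerRZ (py1 p) n1 * powerRZ r n2));
      [intros r; simpl; ring|].
    replace (k * IZR n2 * powerRZ (py1 p) n1 * powerRZ (py2 p) (n2 - 1))
      with (k * powerRZ (py1 p) n1 * (IZR n2 * powerRZ (py2 p) (n2 - 1))) by ring.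
    now apply is_derive_scal, is_derive_powerRZ.
Qed.

Lemma mon_ok_dmon c x p : mon_ok x p -> mon_ok (dmon c x) p.
Proof.
  destruct x as [k n1 n2]; unfold mon_ok; simpl. intros [Hk|[H1 H2]].
  - left. destruct c; simpl; subst; ring.
  - destruct c; simpl; try (left; reflexivity).
    + destruct (Z.eq_dec n1 0) as [->|Hn]; [left; simpl; ring|].
      right; split; [destruct H1; [left; lia | now right] | assumption].
    + destruct (Z.eq_dec n2 0) as [->|Hn]; [left; simpl; ring|].
      right; split; [assumption | destruct H2; [left; lia | now right]].
Qed.

Lemma mon_ok_dmon_list l x p : mon_ok x p -> mon_ok (dmon_list l x) p.
Proof. induction l as [|c l IH]; simpl; auto using mon_ok_dmon. Qed.

Lemma locally_neq0 x : x <> 0 -> locally x (fun r => r <> 0).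
Proof.
  intros Hx. exists (mkposreal _ (Rabs_pos_lt x Hx)). intros r Hr ->.
  change (Rabs (0 - x) < Rabs x) in Hr. rewrite Rminus_0_l, Rabs_Ropp in Hr. lra.
Qed.

Lemma py1_neq0_locally c p : py1 p <> 0 -> locally (get c p) (fun r => py1 (setc c p r) <> 0).
Proof. intros Hp. destruct c; try (now apply filter_forall); now apply locally_neq0. Qed.

Lemma py2_neq0_locally c p : py2 p <> 0 -> locally (get c p) (fun r => py2 (setc c p r) <> 0).
Proof. intros Hp. destruct c; try (now apply filter_forall); now apply locally_neq0. Qed.

Lemma mon_ok_locally c x p : mon_ok x p ->
  locally (get c p) (fun r => mon_ok x (setc c p r)).
Proof.
  unfold mon_ok. intros [Hk|[H1 H2]].
  - apply filter_forall. now left.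
  - eapply filter_imp; [intros r Hr; right; exact Hr|]. apply filter_and.
    + destruct H1 as [H1|H1]; [apply filter_forall; now left|].
      eapply filter_imp; [|now apply py1_neq0_locally]. now right.
    + destruct H2 as [H2|H2]; [apply filter_forall; now left|].
      eapply filter_imp; [|now apply py2_neq0_locally]. now right.
Qed.

Lemma pd_list_eval_mon l x p : mon_ok x p -> pd_list l (eval_mon x) p = eval_mon (dmon_list l x) p.
Proof.
  revert p. induction l as [|c l IH]; intros p Hp; [reflexivity|]. simpl.
  unfold pd. rewrite (Derive_ext_loc _ (fun r => eval_mon (dmon_list l x) (setc c p r))).
  - apply is_derive_unique, is_derive_eval_mon, mon_ok_dmon_list, Hp.
  - eapply filter_imp; [|exact (mon_ok_locally c x p Hp)]. intros r Hr. now apply IH.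
Qed.

Lemma ex_pd_pd_list_eval_mon c l x p : mon_ok x p -> ex_pd c (pd_list l (eval_mon x)) p.
Proof.
  intros Hp. apply (ex_derive_ext_loc (fun r => eval_mon (dmon_list l x) (setc c p r))).
  - eapply filter_imp; [|exact (mon_ok_locally c x p Hp)].
    intros r Hr. symmetry. now apply pd_list_eval_mon.
  - eexists. apply is_derive_eval_mon, mon_ok_dmon_list, Hp.
Qed.

Definition mexp (j : ix) (x : mon) : Z :=
  match j with I1 => mexp1 x | I2 => mexp2 x end.

Lemma eval_dmon_yc j x p : yv j p <> 0 ->
  eval_mon (dmon (yc j) x) p = IZR (mexp j x) * eval_mon x p / yv j p.
Proof.
  destruct x as [k n1 n2]. unfold eval_mon, yv; destruct j; simpl; intros Hy;
    rewrite <- Z.add_opp_r, powerRZ_add by assumption; simpl; field; assumption.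
Qed.

Lemma eval_dmon_xc i x p : eval_mon (dmon (xc i) x) p = 0.
Proof. destruct i; unfold eval_mon; simpl; ring. Qed.

Lemma IZR_mul_powerRZ_pred (u : R) (n : Z) : (0 <= n)%Z \/ u <> 0 ->
  IZR n * (u * powerRZ u (n - 1)) = IZR n * powerRZ u n.
Proof.
  intros H. destruct (Z.eq_dec n 0) as [->|Hn]; [simpl; ring|].
  destruct (Req_dec u 0) as [Hu|Hu].
  - destruct H as [H|H]; [|contradiction].
    destruct (Z_of_nat_complete (n - 1)) as [k Hk]; [lia|].
    rewrite Hk. replace n with (Z.of_nat (S k)) by lia. rewrite <- !pow_powerRZ. simpl. ring.
  - replace (powerRZ u n) with (powerRZ u ((n - 1) + 1)) by (f_equal; lia).
    rewrite powerRZ_add by assumption. simpl. ring.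
Qed.

Lemma eval_mon_euler x p : mon_ok x p ->
  sum2 (fun j => yv j p * eval_mon (dmon (yc j) x) p) = IZR (mexp1 x + mexp2 x) * eval_mon x p.
Proof.
  destruct x as [k n1 n2]. unfold mon_ok, sum2, yv, eval_mon; simpl. intros [->|[H1 H2]]; [ring|].
  rewrite plus_IZR.
  transitivity (k * powerRZ (py2 p) n2 * (IZR n1 * (py1 p * powerRZ (py1 p) (n1 - 1)))
              + k * powerRZ (py1 p) n1 * (IZR n2 * (py2 p * powerRZ (py2 p) (n2 - 1)))); [ring|].
  rewrite !IZR_mul_powerRZ_pred by assumption. ring.
Qed.

(** * Consequences of the homogeneity condition (H) *)

Section Homogeneity.

Variables (U : pt -> Prop) (E : pt -> R).
Hypotheses (U_open : open4 U) (E_smooth : smooth_on U E)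
  (E_hom : forall p, U p -> condH E p).

Lemma ex_pd_pd_list_E l c q : U q -> ex_pd c (pd_list l E) q.
Proof. apply smooth_ex_pd. now apply smooth_on_pd_list. Qed.

Lemma ex_pd_dE c q : U q -> forall j, ex_pd c (pd (yc j) E) q.
Proof. intros Hq j. exact (ex_pd_pd_list_E (yc j :: nil) c q Hq). Qed.

Lemma ex_pd_gmet c k q : U q -> forall j, ex_pd c (gmet E j k) q.
Proof. intros Hq j. exact (ex_pd_pd_list_E (yc j :: yc k :: nil) c q Hq). Qed.

Lemma dE_euler k q : U q -> sum2 (fun j => yv j q * gmet E j k q) = pd (yc k) E q.
Proof.
  intros Hq.
  assert (Z : pd (yc k) (fun p => sum2 (fun j => yv j p * pd (yc j) E p) - 2 * E p) q = 0)
    by (apply (pd_eq0_open U); auto).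
  rewrite (pd_minus _ (fun p => sum2 (fun j => yv j p * pd (yc j) E p))), pd_scal,
    (pd_sum2_mult _ yv (fun j => pd (yc j) E)) in Z.
  - unfold sum2 in Z |- *. rewrite !pd_yc_yv in Z.
    destruct k; [rewrite (gmet_sym U E I2 I1 q) | rewrite (gmet_sym U E I1 I2 q)]; auto;
      unfold gmet, delta, yv in *; lra.
  - intros; apply ex_pd_yv.
  - now apply ex_pd_dE.
  - apply (ex_pd_sum2_mult _ yv (fun j => pd (yc j) E));
      [intros; apply ex_pd_yv | now apply ex_pd_dE].
  - apply ex_pd_scal, (ex_pd_pd_list_E nil), Hq.
Qed.

Lemma pd_dE_euler c k q : U q ->
  sum2 (fun j => pd c (yv j) q * gmet E j k q + yv j q * pd c (gmet E j k) q)
  = pd c (pd (yc k) E) q.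
Proof.
  intros Hq.
  assert (Z : pd c (fun p => sum2 (fun j => yv j p * gmet E j k p) - pd (yc k) E p) q = 0).
  { apply (pd_eq0_open U); auto. intros p Hp. rewrite dE_euler by assumption. ring. }
  rewrite (pd_minus _ (fun p => sum2 (fun j => yv j p * gmet E j k p))),
    (pd_sum2_mult _ yv (fun j => gmet E j k)) in Z.
  - lra.
  - intros; apply ex_pd_yv.
  - now apply ex_pd_gmet.
  - apply (ex_pd_sum2_mult _ yv (fun j => gmet E j k));
      [intros; apply ex_pd_yv | now apply ex_pd_gmet].
  - now apply ex_pd_dE.
Qed.

Lemma dxdE_euler i k q : U q ->
  sum2 (fun j => yv j q * pd (xc i) (gmet E j k) q) = pd (xc i) (pd (yc k) E) q.
Proof.
  intros Hq. rewrite <- (pd_dE_euler (xc i) k q Hq).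
  unfold sum2. rewrite !pd_xc_yv. ring.
Qed.

Lemma dydg_euler l k q : U q -> sum2 (fun j => yv j q * pd (yc l) (gmet E j k) q) = 0.
Proof.
  intros Hq. pose proof (pd_dE_euler (yc l) k q Hq) as H. unfold gmet in H.
  unfold sum2 in *. rewrite !pd_yc_yv in H.
  destruct l; unfold delta, gmet in *; lra.
Qed.

End Homogeneity.

(** * Linear algebra in the plane *)

Definition nonzero2 (w : ix -> R) : Prop := w I1 <> 0 \/ w I2 <> 0.

Definition qform (g : ix -> ix -> R) (w : ix -> R) : R :=
  sum2 (fun j => sum2 (fun k => g j k * w j * w k)).

(* Components of the bracket [v, w] of the vector fields v^l d/dy^l and
   w^l d/dy^l, given their Jacobians dv k l = d v^l / d y^k. *)
Definition lie_bracket (v w : ix -> R) (dv dw : ix -> ix -> R) (l : ix) : R :=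
  sum2 (fun k => v k * dw k l - w k * dv k l).

Lemma cross_eq0_of_orthogonal (x v w : ix -> R) : nonzero2 x ->
  sum2 (fun l => v l * x l) = 0 -> sum2 (fun l => w l * x l) = 0 ->
  v I1 * w I2 - v I2 * w I1 = 0.
Proof.
  unfold sum2. intros [Hx|Hx] Hv Hw.
  - apply (Rmult_eq_reg_l (x I1)); [|exact Hx].
    transitivity (w I2 * (v I1 * x I1 + v I2 * x I2) - v I2 * (w I1 * x I1 + w I2 * x I2));
      [ring | rewrite Hv, Hw; ring].
  - apply (Rmult_eq_reg_l (x I2)); [|exact Hx].
    transitivity (v I1 * (w I1 * x I1 + w I2 * x I2) - w I1 * (v I1 * x I1 + v I2 * x I2));
      [ring | rewrite Hv, Hw; ring].
Qed.

Lemma qform_euler (g : ix -> ix -> R) (y Ey : ix -> R) :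
  (forall k, sum2 (fun j => y j * g j k) = Ey k) -> qform g y = sum2 (fun k => y k * Ey k).
Proof.
  intros Hg. transitivity (sum2 (fun k => y k * sum2 (fun j => y j * g j k))).
  - unfold qform, sum2. ring.
  - unfold sum2 at 1 3. now rewrite !Hg.
Qed.

Lemma qform_kernel (g : ix -> ix -> R) (w : ix -> R) :
  (forall j, sum2 (fun l => w l * g j l) = 0) -> qform g w = 0.
Proof.
  intros Hw.
  transitivity (w I1 * sum2 (fun l => w l * g I1 l) + w I2 * sum2 (fun l => w l * g I2 l)).
  - unfold qform, sum2. ring.
  - rewrite !Hw. ring.
Qed.

Section Annihilator.

Variables (c Ey : ix -> R) (dc g : ix -> ix -> R).
Hypotheses (c_Ey : sum2 (fun l => c l * Ey l) = 0)
  (dc_Ey : forall j, sum2 (fun l => dc j l * Ey l + c l * g j l) = 0)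
  (g_posdef : forall w, nonzero2 w -> 0 < qform g w).

Lemma not_proportional_const (phi : R) (dphi w : ix -> R) : nonzero2 w -> phi <> 0 ->
  (forall l, c l = phi * w l) -> (forall j l, dc j l = dphi j * w l) -> False.
Proof.
  intros Hw Hphi Hc Hdc.
  assert (wE : sum2 (fun l => w l * Ey l) = 0).
  { assert (H : phi * sum2 (fun l => w l * Ey l) = 0)
      by (rewrite <- c_Ey; unfold sum2; rewrite !Hc; ring).
    apply Rmult_integral in H. tauto. }
  assert (Hker : forall j, sum2 (fun l => w l * g j l) = 0).
  { intros j.
    assert (H : phi * sum2 (fun l => w l * g j l) + dphi j * sum2 (fun l => w l * Ey l) = 0)
      by (rewrite <- (dc_Ey j); unfold sum2; rewrite !Hc, !Hdc; ring).
    rewrite wE, Rmult_0_r, Rplus_0_r in H. apply Rmult_integral in H. tauto. }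
  pose proof (g_posdef w Hw) as Hpos. rewrite qform_kernel in Hpos by exact Hker. lra.
Qed.

Lemma not_proportional_y (y : ix -> R) (lambda : R) : lambda <> 0 ->
  0 < sum2 (fun l => y l * Ey l) -> (forall l, c l = lambda * y l) -> False.
Proof.
  intros Hl Hpos Hc.
  assert (Z : lambda * sum2 (fun l => y l * Ey l) = 0)
    by (rewrite <- c_Ey; unfold sum2; rewrite !Hc; ring).
  apply Rmult_integral in Z. lra.
Qed.

Lemma lie_bracket_orthogonal (G1 X : ix -> R) (dG1 : ix -> ix -> R) :
  sum2 (fun k => c k * X k) = 0 ->
  (forall k, X k = sum2 (fun l => dG1 k l * Ey l) + sum2 (fun l => G1 l * g l k)) ->
  sum2 (fun l => lie_bracket c G1 dc dG1 l * Ey l) = 0.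
Proof.
  intros HcX HX.
  transitivity (sum2 (fun k => c k * X k)
    - (G1 I1 * sum2 (fun l => dc I1 l * Ey l + c l * g I1 l)
       + G1 I2 * sum2 (fun l => dc I2 l * Ey l + c l * g I2 l))).
  - unfold sum2 at 2. rewrite !HX. unfold lie_bracket, sum2. ring.
  - rewrite HcX, !dc_Ey. ring.
Qed.

End Annihilator.

(* f^l = scoef l * y1^(2 - sdeg l) * y2^(sdeg l), and sexp l j is its exponent
   of y_j. *)
Definition sdeg (s t : nat) (l : ix) : nat := match l with I1 => t | I2 => s end.

Definition scoef (a b : R) (l : ix) : R := match l with I1 => a | I2 => b end.

Definition sexp (s t : nat) (l j : ix) : R :=
  match j with I1 => 2 - INR (sdeg s t l) | I2 => INR (sdeg s t l) end.

Definition fall3 (n : nat) : R := INR n * (INR n - 1) * (INR n - 2).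

Lemma fall3_gt2 n : fall3 n <> 0 -> (2 < n)%nat.
Proof.
  intros H. destruct n as [|[|[|n]]]; try lia.
  all: exfalso; apply H; unfold fall3; simpl; ring.
Qed.

Section Spray.

Variables (a b : R) (s t : nat).

Definition fmon (l : ix) : mon :=
  Mon (scoef a b l) (2 - Z.of_nat (sdeg s t l)) (Z.of_nat (sdeg s t l)).

Definition berwald222 (l : ix) : pt -> R := pd (yc I2) (Gam2 a b s t l I2 I2).

Lemma fS_eval_mon l : fS a b s t l = eval_mon (fmon l).
Proof.
  apply functional_extensionality. intros p.
  destruct l; unfold fS, eval_mon; simpl; rewrite pow_powerRZ; ring.
Qed.

Lemma fmon_ok l p : spray_domain s t p -> mon_ok (fmon l) p.
Proof.
  intros Hp. right. split; [|left; destruct l; simpl; lia].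
  destruct l; cbn [fmon mexp1 sdeg]; [destruct (le_lt_dec t 2) | destruct (le_lt_dec s 2)];
    [left; lia | right; apply Hp; lia | left; lia | right; apply Hp; lia].
Qed.

Lemma pd_list_fS l ds p : spray_domain s t p ->
  pd_list ds (fS a b s t l) p = eval_mon (dmon_list ds (fmon l)) p.
Proof. intros Hp. rewrite fS_eval_mon. now apply pd_list_eval_mon, fmon_ok. Qed.

Lemma ex_pd_pd_list_fS c l ds p : spray_domain s t p -> ex_pd c (pd_list ds (fS a b s t l)) p.
Proof. intros Hp. rewrite fS_eval_mon. now apply ex_pd_pd_list_eval_mon, fmon_ok. Qed.

Lemma Gam1_pd_list l i :
  Gam1 a b s t l i = fun p => -/2 * pd_list (yc i :: nil) (fS a b s t l) p.
Proof. reflexivity. Qed.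

Lemma Gam2_pd_list l i k :
  Gam2 a b s t l i k = fun p => -/2 * pd_list (yc k :: yc i :: nil) (fS a b s t l) p.
Proof. apply functional_extensionality. intros p. apply pd_scal. Qed.

Lemma berwald222_pd_list l :
  berwald222 l = fun p => -/2 * pd_list (Y2 :: Y2 :: Y2 :: nil) (fS a b s t l) p.
Proof.
  apply functional_extensionality. intros p. unfold berwald222.
  rewrite Gam2_pd_list. apply pd_scal.
Qed.

Lemma ex_pd_Gam1 c l i p : spray_domain s t p -> ex_pd c (Gam1 a b s t l i) p.
Proof. intros Hp. apply ex_pd_scal. now apply (ex_pd_pd_list_fS c l (yc i :: nil)). Qed.

Lemma ex_pd_Gam2 c l i k p : spray_domain s t p -> ex_pd c (Gam2 a b s t l i k) p.
Proof. intros Hp. rewrite Gam2_pd_list. apply ex_pd_scal. now apply ex_pd_pd_list_fS. Qed.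

Lemma ex_pd_berwald222 c l p : spray_domain s t p -> ex_pd c (berwald222 l) p.
Proof. intros Hp. rewrite berwald222_pd_list. apply ex_pd_scal. now apply ex_pd_pd_list_fS. Qed.

Lemma pd_xc_berwald222 i l p : spray_domain s t p -> pd (xc i) (berwald222 l) p = 0.
Proof.
  intros Hp. rewrite berwald222_pd_list, pd_scal.
  change (-/2 * pd_list (xc i :: Y2 :: Y2 :: Y2 :: nil) (fS a b s t l) p = 0).
  rewrite pd_list_fS by exact Hp.
  cbn [dmon_list List.fold_right]. rewrite eval_dmon_xc. ring.
Qed.

Lemma Gam_euler l i p : spray_domain s t p ->
  sum2 (fun k => yv k p * Gam2 a b s t l i k p) = Gam1 a b s t l i p.
Proof.
  intros Hp. unfold sum2 at 1. rewrite !Gam2_pd_list, Gam1_pd_list. cbv beta.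
  rewrite !(pd_list_fS l) by exact Hp. cbn [dmon_list List.fold_right].
  transitivity (-/2 * sum2 (fun k => yv k p * eval_mon (dmon (yc k) (dmon (yc i) (fmon l))) p));
    [unfold sum2; ring|].
  rewrite eval_mon_euler by now apply mon_ok_dmon, fmon_ok.
  assert (Hdeg : (mexp1 (dmon (yc i) (fmon l)) + mexp2 (dmon (yc i) (fmon l)) = 1)%Z)
    by (destruct i, l; cbn [dmon yc fmon mexp1 mexp2]; lia).
  rewrite Hdeg. ring.
Qed.

Lemma berwald_eq0 l i j k p : spray_domain s t p ->
  scoef a b l * fall3 (sdeg s t l) = 0 -> berwald a b s t l i j k p = 0.
Proof.
  intros Hp Hcoef. unfold berwald.
  change (pd (yc i) (pd (yc j) (pd (yc k) (fS a b s t l))) p)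
    with (pd_list (yc i :: yc j :: yc k :: nil) (fS a b s t l) p).
  rewrite pd_list_fS by exact Hp. unfold eval_mon, fall3 in *.
  destruct l, i, j, k;
    cbn [dmon_list List.fold_right dmon yc fmon mcoef mexp1 mexp2 scoef sdeg] in *;
    rewrite ?minus_IZR, <- ?INR_IZR_INZ;
    match goal with
    | |- - / 2 * (?m * _ * _) = 0 => replace m with 0 by lra; ring
    end.
Qed.

Lemma berwald222_eq0 l p : spray_domain s t p ->
  scoef a b l * fall3 (sdeg s t l) = 0 -> berwald222 l p = 0.
Proof. intros Hp Hcoef. rewrite berwald222_pd_list. exact (berwald_eq0 l I2 I2 I2 p Hp Hcoef). Qed.

End Spray.

Section SprayAtPoint.

Variables (a b : R) (s t : nat) (q : pt).
Hypothesis y_neq0 : forall j, yv j q <> 0.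

Let spray_domain_at : spray_domain s t q.
Proof. intros _. exact (y_neq0 I1). Qed.

Lemma IZR_mexp_fmon l j : IZR (mexp j (fmon a b s t l)) = sexp s t l j.
Proof.
  destruct j; cbn [mexp fmon mexp1 mexp2 sexp]; rewrite ?minus_IZR, <- INR_IZR_INZ; reflexivity.
Qed.

Lemma IZR_mexp_dmon x i k : IZR (mexp k (dmon (yc i) x)) = IZR (mexp k x) - delta i k.
Proof. destruct i, k; cbn [mexp dmon yc mexp1 mexp2 delta]; rewrite ?minus_IZR; simpl; ring. Qed.

Lemma Gam1_at l i : Gam1 a b s t l i q = -/2 * sexp s t l i * fS a b s t l q / yv i q.
Proof.
  rewrite Gam1_pd_list, pd_list_fS by exact spray_domain_at. cbn [dmon_list List.fold_right].
  rewrite eval_dmon_yc, IZR_mexp_fmon, fS_eval_mon by apply y_neq0. field. apply y_neq0.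
Qed.

Lemma Gam2_at l i k : Gam2 a b s t l i k q
  = -/2 * sexp s t l i * (sexp s t l k - delta i k) * fS a b s t l q / (yv i q * yv k q).
Proof.
  rewrite Gam2_pd_list, pd_list_fS by exact spray_domain_at. cbn [dmon_list List.fold_right].
  rewrite !eval_dmon_yc, IZR_mexp_dmon, !IZR_mexp_fmon, fS_eval_mon by apply y_neq0.
  field. split; apply y_neq0.
Qed.

Lemma berwald222_at l :
  berwald222 a b s t l q = -/2 * fall3 (sdeg s t l) * fS a b s t l q / yv I2 q ^ 3.
Proof.
  rewrite berwald222_pd_list, pd_list_fS by exact spray_domain_at. cbn [dmon_list List.fold_right].
  change Y2 with (yc I2).
  rewrite !eval_dmon_yc, !IZR_mexp_dmon, !IZR_mexp_fmon, fS_eval_mon by apply y_neq0.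
  unfold fall3, sexp, delta. field. apply y_neq0.
Qed.

Lemma pd_berwald222_at j l : pd (yc j) (berwald222 a b s t l) q
  = (sexp s t l j - 3 * delta I2 j) * berwald222 a b s t l q / yv j q.
Proof.
  rewrite berwald222_pd_list, pd_scal.
  change (-/2 * pd_list (yc j :: Y2 :: Y2 :: Y2 :: nil) (fS a b s t l) q
    = (sexp s t l j - 3 * delta I2 j)
      * (-/2 * pd_list (Y2 :: Y2 :: Y2 :: nil) (fS a b s t l) q) / yv j q).
  rewrite !pd_list_fS by exact spray_domain_at. cbn [dmon_list List.fold_right].
  change Y2 with (yc I2).
  rewrite (eval_dmon_yc j), !IZR_mexp_dmon, IZR_mexp_fmon by apply y_neq0.
  destruct j; unfold delta; field; apply y_neq0.
Qed.

Lemma fS_neq0_at l : scoef a b l <> 0 -> fS a b s t l q <> 0.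
Proof.
  intros Hl. rewrite fS_eval_mon. unfold eval_mon.
  repeat apply Rmult_integral_contrapositive_currified;
    [exact Hl | apply powerRZ_NOR, (y_neq0 I1) | apply powerRZ_NOR, (y_neq0 I2)].
Qed.

Lemma berwald222_neq0_at l :
  scoef a b l * fall3 (sdeg s t l) <> 0 -> berwald222 a b s t l q <> 0.
Proof.
  intros Hcoef. rewrite berwald222_at.
  assert (Hs : scoef a b l <> 0) by (intros H; apply Hcoef; rewrite H; ring).
  assert (Hf : fall3 (sdeg s t l) <> 0) by (intros H; apply Hcoef; rewrite H; ring).
  pose proof (fS_neq0_at l Hs). pose proof (pow_nonzero _ 3 (y_neq0 I2)).
  revert Hf. generalize (fall3 (sdeg s t l)). intros f Hf.
  unfold Rdiv. repeat apply Rmult_integral_contrapositive_currified; auto with real.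
Qed.

Let c l := berwald222 a b s t l q.
Let dc j l := pd (yc j) (berwald222 a b s t l) q.
Let G1 i l := Gam1 a b s t l i q.
Let dG1 i k l := Gam2 a b s t l i k q.
Let F l := fS a b s t l q.
Let K1 := INR t.
Let K2 := INR s.
Let u := yv I1 q.
Let v := yv I2 q.

Lemma lie_bracket_cross_I1 :
  c I1 * lie_bracket c (G1 I1) dc (dG1 I1) I2 - c I2 * lie_bracket c (G1 I1) dc (dG1 I1) I1
  = -/8 * F I1 * F I2 * (K1 - 2) * (K2 - 2) * (K2 - K1) * (K2 + K1 - 1) / (u ^ 2 * v ^ 7)
    * (fall3 t * (1 - K2) * F I1 * v + fall3 s * K1 * F I2 * u).
Proof.
  unfold c, dc, G1, dG1, lie_bracket, sum2.
  rewrite !pd_berwald222_at, !Gam1_at, !Gam2_at, !berwald222_at.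
  unfold F, K1, K2, u, v, fall3, sexp, delta, sdeg. field. split; apply y_neq0.
Qed.

Lemma lie_bracket_cross_I2 :
  c I1 * lie_bracket c (G1 I2) dc (dG1 I2) I2 - c I2 * lie_bracket c (G1 I2) dc (dG1 I2) I1
  = -/8 * F I1 * F I2 * K1 * K2 * (K1 - K2) * (K1 + K2 - 3) / (u * v ^ 8)
    * (fall3 t * (2 - K2) * F I1 * v + fall3 s * (K1 - 1) * F I2 * u).
Proof.
  unfold c, dc, G1, dG1, lie_bracket, sum2.
  rewrite !pd_berwald222_at, !Gam1_at, !Gam2_at, !berwald222_at.
  unfold F, K1, K2, u, v, fall3, sexp, delta, sdeg. field. split; apply y_neq0.
Qed.

Lemma berwald222_parallel_y : scoef a b I1 * fall3 t <> 0 -> scoef a b I2 * fall3 s <> 0 ->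
  t <> s ->
  c I1 * lie_bracket c (G1 I1) dc (dG1 I1) I2 - c I2 * lie_bracket c (G1 I1) dc (dG1 I1) I1 = 0 ->
  c I1 * lie_bracket c (G1 I2) dc (dG1 I2) I2 - c I2 * lie_bracket c (G1 I2) dc (dG1 I2) I1 = 0 ->
  c I1 * v = c I2 * u.
Proof.
  intros h1 h2 hts D1 D2. rewrite lie_bracket_cross_I1 in D1. rewrite lie_bracket_cross_I2 in D2.
  assert (F1 : F I1 <> 0) by (apply fS_neq0_at; intros H; apply h1; rewrite H; ring).
  assert (F2 : F I2 <> 0) by (apply fS_neq0_at; intros H; apply h2; rewrite H; ring).
  assert (t3 : 3 <= K1)
    by (replace 3 with (INR 3) by (simpl; ring); apply le_INR, fall3_gt2;
        intros H; apply h1; rewrite H; ring).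
  assert (s3 : 3 <= K2)
    by (replace 3 with (INR 3) by (simpl; ring); apply le_INR, fall3_gt2;
        intros H; apply h2; rewrite H; ring).
  assert (Kne : K1 <> K2) by (intros H; now apply hts, INR_eq).
  pose proof (y_neq0 I1) as hu; pose proof (y_neq0 I2) as hv. fold u v in hu, hv.
  assert (lin : fall3 t * F I1 * v - fall3 s * F I2 * u = 0).
  { clearbody F K1 K2 u v. apply Rmult_integral in D1 as [D1|L1]; [exfalso; revert D1|].
    { unfold Rdiv. repeat apply Rmult_integral_contrapositive_currified;
        auto using Rinv_neq_0_compat, pow_nonzero with real; lra. }
    apply Rmult_integral in D2 as [D2|L2]; [exfalso; revert D2|].
    { unfold Rdiv. repeat apply Rmult_integral_contrapositive_currified;
        auto using Rinv_neq_0_compat, pow_nonzero with real; lra. }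
    lra. }
  assert (Hrel : fall3 t * F I1 * v = fall3 s * F I2 * u) by lra.
  unfold c, F, u, v in *. rewrite !berwald222_at. cbn [sdeg].
  transitivity (-/2 / yv I2 q ^ 3 * (fall3 t * fS a b s t I1 q * yv I2 q)); [field; exact hv|].
  rewrite Hrel. field. exact hv.
Qed.

End SprayAtPoint.

(** * The Landsberg condition *)

Section Landsberg.

Variables (a b : R) (s t : nat) (U : pt -> Prop) (E : pt -> R).
Hypotheses (U_open : open4 U) (U_spray : forall p, U p -> spray_domain s t p)
  (E_smooth : smooth_on U E) (E_hom : forall p, U p -> condH E p)
  (E_Ls : forall p, U p -> condLs a b s t E p).

Lemma landsberg_trace i k q : U q ->
  pd (xc i) (pd (yc k) E) q
  = sum2 (fun l => Gam2 a b s t l i k q * pd (yc l) E q)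
    + sum2 (fun l => Gam1 a b s t l i q * gmet E l k q).
Proof.
  intros Hq.
  (* The contraction y^j (Ls)_{ijk}; each homogeneity identity below is weighted by
     its coefficient in it, so that the result is a linear combination. *)
  pose proof (f_equal2 (fun x y => yv I1 q * x + yv I2 q * y)
                (E_Ls q Hq i I1 k) (E_Ls q Hq i I2 k)) as Hy. cbv beta in Hy.
  pose proof (dxdE_euler U E U_open E_smooth E_hom i k q Hq) as Hx.
  assert (Hdg : forall l,
    Gam1 a b s t l i q * sum2 (fun j => yv j q * pd (yc l) (gmet E j k) q) = 0)
    by (intros l; rewrite (dydg_euler U E) by assumption; ring).
  assert (HdE : forall l, Gam2 a b s t l i k q * sum2 (fun j => yv j q * gmet E j l q)
                          = Gam2 a b s t l i k q * pd (yc l) E q)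
    by (intros l; now rewrite (dE_euler U E)).
  assert (HG : forall l, sum2 (fun j => yv j q * Gam2 a b s t l i j q) * gmet E l k q
                         = Gam1 a b s t l i q * gmet E l k q)
    by (intros l; now rewrite Gam_euler by auto).
  pose proof (Hdg I1); pose proof (Hdg I2); pose proof (HdE I1); pose proof (HdE I2);
    pose proof (HG I1); pose proof (HG I2); clear Hdg HdE HG.
  unfold sum2 in *; cbv beta in *.
  rewrite (gmet_sym U E I2 I1 q) in * by assumption.
  lra.
Qed.

Lemma berwald_annihilates_dE i j k q : U q ->
  sum2 (fun l => pd (yc j) (Gam2 a b s t l i k) q * pd (yc l) E q) = 0.
Proof.
  intros Hq. pose proof (U_spray q Hq) as Hd.
  (* Differentiate the contracted identity in y^j and compare with (Ls)_{ijk}. *)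
  assert (Z : pd (yc j) (fun p => pd (xc i) (pd (yc k) E) p
      - sum2 (fun l => Gam2 a b s t l i k p * pd (yc l) E p)
      - sum2 (fun l => Gam1 a b s t l i p * gmet E l k p)) q = 0).
  { apply (pd_eq0_open U); auto. intros p Hp. rewrite landsberg_trace by exact Hp. ring. }
  assert (HG2 : forall l, ex_pd (yc j) (Gam2 a b s t l i k) q) by (intros; now apply ex_pd_Gam2).
  assert (HG1 : forall l, ex_pd (yc j) (Gam1 a b s t l i) q) by (intros; now apply ex_pd_Gam1).
  pose proof (ex_pd_dE U E E_smooth (yc j) q Hq) as HdE.
  pose proof (ex_pd_gmet U E E_smooth (yc j) k q Hq) as Hg.
  pose proof (ex_pd_pd_list_E U E E_smooth (xc i :: yc k :: nil) (yc j) q Hq) as HX.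
  rewrite (pd_minus _ (fun p => pd (xc i) (pd (yc k) E) p
             - sum2 (fun l => Gam2 a b s t l i k p * pd (yc l) E p))), pd_minus,
    (pd_sum2_mult _ (fun l => Gam2 a b s t l i k) (fun l => pd (yc l) E)),
    (pd_sum2_mult _ (fun l => Gam1 a b s t l i) (fun l => gmet E l k)) in Z;
    auto using ex_pd_minus, ex_pd_sum2_mult.
  assert (Hsm : smooth_on U (pd (yc k) E)) by now apply smooth_on_pd.
  rewrite (pd_comm (yc j) (xc i) q ltac:(now destruct i, j) U _ U_open Hsm Hq) in Z.
  assert (Hgl : forall l, pd (yc j) (gmet E l k) q = pd (yc l) (gmet E j k) q).
  { intros l. destruct l, j; try reflexivity;
      (eapply (pd_comm _ _ q); [discriminate | exact U_open | exact Hsm | exact Hq]). }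
  pose proof (E_Ls q Hq i j k) as L.
  pose proof (gmet_sym U E I2 I1 q U_open E_smooth Hq) as Hs.
  unfold sum2 in *. rewrite !Hgl in Z. unfold gmet, Gam2 in Z, L, Hs |- *.
  destruct j; [rewrite Hs in L | rewrite Hs in Z]; lra.
Qed.

Lemma berwald222_dE q : U q -> sum2 (fun l => berwald222 a b s t l q * pd (yc l) E q) = 0.
Proof. exact (berwald_annihilates_dE I2 I2 I2 q). Qed.

Lemma pd_berwald222_dE c q : U q ->
  sum2 (fun l => pd c (berwald222 a b s t l) q * pd (yc l) E q
                 + berwald222 a b s t l q * pd c (pd (yc l) E) q) = 0.
Proof.
  intros Hq. rewrite <- (pd_sum2_mult c (berwald222 a b s t) (fun l => pd (yc l) E)).
  - apply (pd_eq0_open U); auto. intros p Hp. now apply berwald222_dE.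
  - intros l. now apply ex_pd_berwald222, U_spray.
  - exact (ex_pd_dE U E E_smooth c q Hq).
Qed.

Section AtPoint.

Variable q : pt.
Hypotheses (Hq : U q) (y_neq0 : forall j, yv j q <> 0) (E_posdef : posdef E q).

Let coef l := scoef a b l * fall3 (sdeg s t l).
Let c l := berwald222 a b s t l q.
Let dc j l := pd (yc j) (berwald222 a b s t l) q.
Let Ey l := pd (yc l) E q.
Let g j k := gmet E j k q.

Let c_Ey : sum2 (fun l => c l * Ey l) = 0.
Proof. exact (berwald222_dE q Hq). Qed.

Let dc_Ey j : sum2 (fun l => dc j l * Ey l + c l * g j l) = 0.
Proof. exact (pd_berwald222_dE (yc j) q Hq). Qed.

Let g_posdef w : nonzero2 w -> 0 < qform g w.
Proof. exact (E_posdef w). Qed.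

Let y_Ey_pos : 0 < sum2 (fun l => yv l q * Ey l).
Proof.
  rewrite <- (qform_euler g).
  - apply g_posdef. left. apply y_neq0.
  - intros k. exact (dE_euler U E U_open E_smooth E_hom k q Hq).
Qed.

Lemma one_berwald222_false l m : l <> m -> coef l <> 0 -> coef m = 0 -> False.
Proof.
  intros Hlm Hl Hm.
  assert (cm : c m = 0) by exact (berwald222_eq0 a b s t m q (U_spray q Hq) Hm).
  apply (not_proportional_const c Ey dc g c_Ey dc_Ey g_posdef (c l) (fun j => dc j l) (delta l)).
  - destruct l; [left | right]; simpl; lra.
  - exact (berwald222_neq0_at a b s t q y_neq0 l Hl).
  - intros k. destruct l, m, k; try congruence; simpl; rewrite ?cm; ring.
  - intros j k. unfold dc. rewrite !(pd_berwald222_at a b s t q y_neq0). fold (c k) (c l).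
    destruct l, m, k; try congruence; simpl; rewrite ?cm; field; apply y_neq0.
Qed.

Lemma equal_degrees_false : t = s -> coef I1 <> 0 \/ coef I2 <> 0 -> False.
Proof.
  intros ets Hcoef.
  assert (Hf : fall3 t <> 0)
    by (destruct Hcoef as [H|H]; intros Hf; apply H; unfold coef; simpl; rewrite <- ?ets, Hf; ring).
  set (phi := -/2 * fall3 t / yv I2 q ^ 3).
  apply (not_proportional_const c Ey dc g c_Ey dc_Ey g_posdef phi
           (fun j => (sexp s t I1 j - 3 * delta I2 j) * phi / yv j q) (fun l => fS a b s t l q)).
  - destruct Hcoef as [H|H]; [left | right]; apply (fS_neq0_at a b s t q y_neq0);
      intros H0; apply H; unfold coef; rewrite H0; ring.
  - pose proof (pow_nonzero _ 3 (y_neq0 I2)). unfold phi. revert Hf.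
    generalize (fall3 t). intros f Hf. unfold Rdiv.
    repeat apply Rmult_integral_contrapositive_currified; auto with real.
  - intros l. unfold c, phi; cbv beta. rewrite berwald222_at by exact y_neq0.
    destruct l; simpl; rewrite <- ?ets; field; repeat split; apply y_neq0.
  - intros j l. unfold dc, phi; cbv beta. rewrite pd_berwald222_at, berwald222_at by exact y_neq0.
    destruct l, j; simpl; rewrite <- ?ets; field; repeat split; apply y_neq0.
Qed.

Lemma distinct_degrees_false : coef I1 <> 0 -> coef I2 <> 0 -> t <> s -> False.
Proof.
  intros h1 h2 hts.
  assert (Ey_nonzero : nonzero2 Ey).
  { pose proof y_Ey_pos as H. unfold sum2 in H.
    destruct (Req_dec (Ey I1) 0) as [e|e]; [right | now left].
    intros e'. rewrite e, e' in H. lra. }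
  assert (cross : forall i,
    c I1 * lie_bracket c (fun l => Gam1 a b s t l i q) dc (fun k l => Gam2 a b s t l i k q) I2
    - c I2 * lie_bracket c (fun l => Gam1 a b s t l i q) dc
                (fun k l => Gam2 a b s t l i k q) I1 = 0).
  { intros i. apply (cross_eq0_of_orthogonal Ey); [exact Ey_nonzero | exact c_Ey |].
    apply (lie_bracket_orthogonal c Ey dc g dc_Ey _ (fun k => pd (xc i) (pd (yc k) E) q)).
    - pose proof (pd_berwald222_dE (xc i) q Hq) as H. unfold sum2 in *.
      rewrite !pd_xc_berwald222 in H by exact (U_spray q Hq). unfold c. lra.
    - intros k. exact (landsberg_trace i k q Hq). }
  pose proof (berwald222_parallel_y a b s t q y_neq0 h1 h2 hts (cross I1) (cross I2)) as Hpar.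
  apply (not_proportional_y c Ey c_Ey (fun l => yv l q) (c I1 / yv I1 q)).
  - pose proof (berwald222_neq0_at a b s t q y_neq0 I1 h1). pose proof (y_neq0 I1).
    unfold Rdiv. apply Rmult_integral_contrapositive_currified; auto with real.
  - exact y_Ey_pos.
  - intros l. pose proof (y_neq0 I1). destruct l; [field; exact H|].
    apply (Rmult_eq_reg_r (yv I1 q)); [|exact H]. unfold c in *.
    rewrite <- Hpar. field. exact H.
Qed.

Lemma landsberg_point_false : (exists l, coef l <> 0) -> False.
Proof.
  intros [l Hl].
  destruct (Req_dec (coef I1) 0) as [h1|h1].
  { destruct l; [contradiction|]. exact (one_berwald222_false I2 I1 ltac:(discriminate) Hl h1). }
  destruct (Req_dec (coef I2) 0) as [h2|h2].
  { exact (one_berwald222_false I1 I2 ltac:(discriminate) h1 h2). }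
  destruct (Nat.eq_dec t s) as [hts|hts].
  - exact (equal_degrees_false hts (or_introl h1)).
  - exact (distinct_degrees_false h1 h2 hts).
Qed.

End AtPoint.

End Landsberg.

Lemma exists_py2_neq0 U p : open4 U -> U p -> exists q, U q /\ py2 q <> 0.
Proof.
  intros HU Hp. destruct (Req_dec (py2 p) 0) as [Hz|Hz]; [|now exists p].
  destruct (HU p Hp) as [e [He Hball]]. exists (setc Y2 p (e / 2)). split; [|simpl; lra].
  apply Hball. rewrite <- (setc_setc Y2 p (e / 2) (e / 2)).
  apply dist4_setc2; simpl; rewrite Hz, Rminus_0_l, Rabs_Ropp, Rabs_right; lra.
Qed.

Theorem mainTheorem15 (a b : R) (s t : nat) :
  ~ exists (U : pt -> Prop) (E : pt -> R),
      open4 U /\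
      (forall p, U p -> spray_domain s t p) /\
      (exists p l i j k, U p /\ berwald a b s t l i j k p <> 0) /\
      smooth_on U E /\
      (forall p, U p ->
         condH E p /\ condEL a b s t E p /\ condLs a b s t E p /\ posdef E p).
Proof.
  intros [U [E [HU [Hdom [[p0 [l [i [j [k [Hp0 Hb]]]]]] [HE HC]]]]]].
  assert (HH : forall p, U p -> condH E p) by (intros p Hp; exact (proj1 (HC p Hp))).
  assert (HLs : forall p, U p -> condLs a b s t E p)
    by (intros p Hp; exact (proj1 (proj2 (proj2 (HC p Hp))))).
  assert (Hcoef : scoef a b l * fall3 (sdeg s t l) <> 0)
    by (intros H; exact (Hb (berwald_eq0 a b s t l i j k p0 (Hdom p0 Hp0) H))).
  destruct (exists_py2_neq0 U p0 HU Hp0) as [q [Hq Hv]].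
  assert (Hy : forall j, yv j q <> 0).
  { intros [|]; [apply (Hdom q Hq) | exact Hv].
    destruct l; simpl in Hcoef; [left | right]; apply fall3_gt2; intros H; apply Hcoef;
      rewrite H; ring. }
  apply (landsberg_point_false a b s t U E HU Hdom HE HH HLs q Hq Hy
           (proj2 (proj2 (proj2 (HC q Hq))))).
  now exists l.
Qed.
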